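(* Let $C\subseteq[n]$ (viewed as a single column of boxes of $[n]^2$, with a box in row $i$ for each $i\in C$), and let $r_C$ be the rank function of the Schubert matroid $SM_n(C)$. Let $S$ be a $k$-subset of $[n]$ and let $\pi=\pi_1\pi_2\cdots\pi_k$ be any ordering of the elements of $S$. Then \[r_C(S)=|\mathcal{F}_\pi(C)|.\]
   Context: For $T=\{a_1<\cdots<a_k\}$ and $S=\{b_1<\cdots<b_k\}$ subsets of $[n]$, write $T\le S$ if $\#T=\#S$ and $a_i\le b_i$ for all $i$. The Schubert matroid $SM_n(C)$ is the matroid on $[n]$ whose bases are $\{T\subseteq[n]\colon T\le C\}$; its rank function is $r_C(A)=\max\{\#(A\cap B)\colon B\text{ a basis}\}$. The filling $\mathcal{F}_\pi(C)$: starting with all boxes of $C$ empty, for $t=1,\ldots,k$ in turn place $\pi_t$ into the topmost still-empty box of $C$ whose row index is $\ge\pi_t$; if no such box exists, skip $\pi_t$. $|\mathcal{F}|$ denotes the number of nonempty boxes of a filling $\mathcal{F}$. *)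

From mathcomp Require Import all_boot all_order.
Set Implicit Arguments. Unset Strict Implicit. Unset Printing Implicit Defensive.

(* [n] is modelled by 'I_n = {0,...,n-1} (order-preserving relabelling). *)

Definition sorted_elems n (A : {set 'I_n}) : seq nat :=
  sort leq [seq val x | x <- enum A].

Definition gale_le n (T S : {set 'I_n}) : bool :=
  (#|T| == #|S|) &&
  all2 leq (sorted_elems T) (sorted_elems S).

Definition schubert_basis n (C B : {set 'I_n}) : bool := gale_le B C.

Definition schubert_rank n (C A : {set 'I_n}) : nat :=
  \max_(B : {set 'I_n} | schubert_basis C B) #|A :&: B|.

(* A filling of the column C: F i = Some v means the box in row i (i \in C)
   contains v; None means empty. *)
Definition filling_type n := {ffun 'I_n -> option 'I_n}.

Definition empty_filling n : filling_type n := [ffun _ => None].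

Definition target_box n (C : {set 'I_n}) (F : filling_type n) (x : 'I_n)
  : option 'I_n :=
  [pick i | [&& i \in C, F i == None, x <= i &
     [forall j, ((j \in C) && (F j == None) && (x <= j)) ==> (i <= j)]]].

Definition fill_step n (C : {set 'I_n}) (F : filling_type n) (x : 'I_n)
  : filling_type n :=
  match target_box C F x with
  | Some i => [ffun j => if j == i then Some x else F j]
  | None => F
  end.

Definition filling n (C : {set 'I_n}) (pi : seq 'I_n) : filling_type n :=
  foldl (fill_step C) (empty_filling n) pi.

Definition filling_size n (C : {set 'I_n}) (F : filling_type n) : nat :=
  #|[set i in C | F i != None]|.

(* r_C(S) = min_t (#{x in S | x < t} + #{c in C | c >= t}).  A basis B <= C has at
   most as many elements as C in the rows >= t, which gives "<=" for every t;
   conversely a set that C dominates row-wise in this sense extends to a basis.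
   The entries of the filling form a subset of S matched injectively to boxes of C
   in rows at least as large, so |F| <= r_C(S).  For the reverse inequality take t
   one past the last empty box of C: all boxes of C in rows >= t are filled, and
   every x in S with x < t was placed in a row < t, since an entry only ever skips
   filled boxes. *)

From mathcomp Require Import all_boot zify.
Set Implicit Arguments. Unset Strict Implicit. Unset Printing Implicit Defensive.

Definition geq_set n (t : nat) : {set 'I_n} := [set x : 'I_n | t <= x].

Definition dominated n (T C : {set 'I_n}) : Prop :=
  forall t, #|T :&: geq_set n t| <= #|C :&: geq_set n t|.

Lemma card_geq_set_count n (A : {set 'I_n}) t :
  #|A :&: geq_set n t| = count (leq t) (sorted_elems A).
Proof.
rewrite /sorted_elems (permP (permEl (perm_sort leq _))) count_map.
rewrite cardE /enum_mem size_filter count_filter.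
by apply: eq_count => x /=; rewrite !inE andbC.
Qed.

Lemma size_sorted_elems n (A : {set 'I_n}) : size (sorted_elems A) = #|A|.
Proof. by rewrite /sorted_elems size_sort size_map cardE. Qed.

Lemma sorted_elems_sorted n (A : {set 'I_n}) : sorted leq (sorted_elems A).
Proof. exact: (sort_sorted leq_total). Qed.

Lemma all2_leq_count (s s' : seq nat) t :
  all2 leq s s' -> count (leq t) s <= count (leq t) s'.
Proof.
elim: s s' => [|a s IHs] [|b s'] //= /andP [le_ab /IHs le_ss'].
apply: leq_add le_ss'; case: (leqP t a) => // le_ta.
by rewrite (leq_trans le_ta le_ab).
Qed.

Lemma count_leq_all2 (s s' : seq nat) :
  sorted leq s -> sorted leq s' -> size s = size s' ->
  (forall t, count (leq t) s <= count (leq t) s') -> all2 leq s s'.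
Proof.
elim: s s' => [|a s IHs] [|b s'] //= path_s path_s' [size_ss'] le_count.
have count_s : count (leq a) s = size s.
  by apply/eqP; rewrite -all_count; apply: (order_path_min leq_trans).
have s'_ge_b : all (leq b) s' by apply: (order_path_min leq_trans).
have le_ab : a <= b.
  have := le_count a; rewrite /= leqnn count_s size_ss'.
  by case: (leqP a b) => // _; rewrite ltnNge count_size.
rewrite le_ab /=; apply: (IHs _ (path_sorted path_s) (path_sorted path_s') size_ss').
move=> t; case: (leqP t b) => [le_tb | lt_bt].
  have s'_ge_t : all (leq t) s' by apply/allP => x /(allP s'_ge_b); apply: leq_trans.
  by move: s'_ge_t; rewrite all_count => /eqP ->; rewrite -size_ss' count_size.
by have := le_count t; rewrite /= (leqNgt t b) lt_bt (leqNgt t a) (leq_ltn_trans le_ab lt_bt).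
Qed.

Lemma gale_leP n (B C : {set 'I_n}) :
  gale_le B C <-> #|B| = #|C| /\ dominated B C.
Proof.
split=> [/andP [/eqP cardBC le_BC] | [cardBC domBC]].
  by split=> // t; rewrite !card_geq_set_count; apply: all2_leq_count.
rewrite /gale_le cardBC eqxx; apply: count_leq_all2;
  rewrite ?sorted_elems_sorted ?size_sorted_elems // => t.
by rewrite -!card_geq_set_count.
Qed.

Lemma schubert_rank_le_split n (C S : {set 'I_n}) t :
  schubert_rank C S <= #|S :\: geq_set n t| + #|C :&: geq_set n t|.
Proof.
apply/bigmax_leqP => B /gale_leP [_ domBC].
apply: (leq_trans _ (leq_add (leqnn _) (domBC t))).
apply: (leq_trans _ (leq_card_setU _ _)); apply: subset_leq_card.
by apply/subsetP => x; rewrite !inE => /andP [-> ->]; case: (t <= x).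
Qed.

Lemma discrete_ivt (f : nat -> nat) k N :
  f 0 <= k <= f N -> (forall s, f s.+1 <= (f s).+1) -> exists2 s, s <= N & f s = k.
Proof.
move=> /andP [le_f0k le_kfN] card_B_step; elim: N le_kfN => [|N IHN] le_kfN.
  by exists 0 => //; apply/eqP; rewrite eqn_leq le_f0k le_kfN.
case: (leqP k (f N)) => [/IHN [s le_sN <-] | lt_fNk]; first by exists s => //; apply: leqW.
by exists N.+1 => //; apply/eqP; rewrite eqn_leq le_kfN (leq_trans (card_B_step N)).
Qed.

(* A dominated set is completed to a basis by adding an initial segment [0, s) of
   the right size; such an s exists since adding one row at a time raises the size
   by at most one. *)
Lemma dominated_extend n (T C : {set 'I_n}) :
  dominated T C -> exists2 B : {set 'I_n}, T \subset B & gale_le B C.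
Proof.
move=> domTC; pose B (s : nat) : {set 'I_n} := T :|: ~: geq_set n s.
have card_B0 : #|B 0| <= #|C|.
  have geq0 : geq_set n 0 = setT by apply/setP => x; rewrite !inE.
  by have := domTC 0; rewrite /B geq0 !setIT setCT setU0.
have card_Bn : #|C| <= #|B n|.
  by apply: subset_leq_card; apply/subsetP => x _; rewrite !inE -ltnNge ltn_ord orbT.
have card_B_step s : #|B s.+1| <= #|B s|.+1.
  have row_s : #|[set x : 'I_n | val x == s]| <= 1.
    by apply/card_le1_eqP => x y; rewrite !inE => /eqP xs /eqP ys; apply: val_inj; rewrite xs ys.
  apply: (@leq_trans (#|B s| + #|[set x : 'I_n | val x == s]|)); last by rewrite -addn1 leq_add2l.
  apply: leq_trans (leq_card_setU _ _); apply: subset_leq_card; apply/subsetP => x.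
  by rewrite !inE -!ltnNge ltnS leq_eqVlt => /orP [->|/orP [->|->]]; rewrite ?orbT.
case: (discrete_ivt (f := fun s => #|B s|) (k := #|C|) (N := n)) => //.
  by rewrite card_B0 card_Bn.
move=> s _ cardB; exists (B s); first exact: subsetUl.
apply/gale_leP; split=> // t; case: (leqP s t) => [le_st | lt_ts].
  apply: leq_trans (domTC t); apply: subset_leq_card; apply/subsetP => x.
  rewrite !inE -ltnNge => /andP [/orP [-> -> // | lt_xs le_tx]].
  by have := leq_trans le_st le_tx; rewrite leqNgt lt_xs.
have eB := cardsID (geq_set n t) (B s); have eC := cardsID (geq_set n t) C.
have : #|C :\: geq_set n t| <= #|B s :\: geq_set n t|.
  apply: subset_leq_card; apply/subsetP => x; rewrite !inE -!ltnNge => /andP [lt_xt _].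
  by rewrite lt_xt (ltn_trans lt_xt lt_ts) orbT.
lia.
Qed.

Lemma schubert_rank_ge_matching n (C S U : {set 'I_n}) (g : 'I_n -> 'I_n) :
  U \subset C -> {in U &, injective g} -> g @: U \subset S ->
  (forall i, i \in U -> g i <= i) -> #|U| <= schubert_rank C S.
Proof.
move=> sUC g_inj sgUS le_g.
have domT : dominated (g @: U) C.
  move=> t; apply: (leq_trans _ (subset_leq_card (setSI _ sUC))).
  apply: leq_trans (leq_imset_card g _); apply: subset_leq_card; apply/subsetP => x.
  rewrite !inE => /andP [/imsetP [i iU ->] le_tg]; apply/imsetP; exists i => //.
  by rewrite !inE iU (leq_trans le_tg (le_g i iU)).
have [B sTB baseB] := dominated_extend domT.
rewrite -(card_in_imset g_inj); apply: (leq_trans _ (@leq_bigmax_cond _ (schubert_basis C) (fun B => #|S :&: B|) B baseB)).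
by apply: subset_leq_card; rewrite subsetI sgUS sTB.
Qed.

Section FillStep.
Variables (n : nat) (C : {set 'I_n}).
Implicit Types (F : filling_type n) (p : seq 'I_n).

Variant target_box_spec F (y : 'I_n) : option 'I_n -> Prop :=
| TargetBox i of i \in C & F i = None & y <= i
    & (forall j, j \in C -> F j = None -> y <= j -> i <= j) :
    target_box_spec F y (Some i)
| NoTargetBox of (forall j, j \in C -> y <= j -> F j != None) :
    target_box_spec F y None.

Lemma target_boxP F y : target_box_spec F y (target_box C F y).
Proof.
rewrite /target_box; case: pickP => [i /and4P [iC /eqP Fi le_yi /forallP i_min] | no_box].
  by apply: TargetBox => // j jC Fj le_yj; have := i_min j; rewrite jC Fj le_yj.
apply: NoTargetBox => j jC le_yj; apply/negP => /eqP Fj.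
pose empty_box k := [&& k \in C, F k == None & y <= k].
have empty_j : empty_box j by rewrite /empty_box jC Fj eqxx.
have [k /and3P [kC Fk le_yk] k_min] := arg_minnP val empty_j.
have := no_box k; rewrite kC Fk le_yk /=; move/negbT/negP; apply.
by apply/forallP => l; apply/implyP => /andP [/andP [lC Fl] le_yl]; apply: k_min; rewrite /empty_box lC Fl.
Qed.

Record filling_inv p F : Prop := FillingInv {
  filled_inj : forall i j x, F i = Some x -> F j = Some x -> i = j;
  filled_sub : forall i x, F i = Some x -> [/\ x <= i, x \in p & i \in C];
  unplaced_blocked : forall x, x \in p -> (forall i, F i != Some x) ->
    forall c, c \in C -> x <= c -> F c != None;
  skipped_filled : forall b x c, F b = Some x -> c \in C -> x <= c -> c < b -> F c != None
}.

Lemma filling_inv_nil : filling_inv [::] (empty_filling n).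
Proof. by split=> // [i j x | i x | b x c]; rewrite ffunE. Qed.

Lemma fill_box_inv p F y i :
  y \notin p -> filling_inv p F ->
  i \in C -> F i = None -> y <= i -> (forall j, j \in C -> F j = None -> y <= j -> i <= j) ->
  filling_inv (rcons p y) [ffun j => if j == i then Some y else F j].
Proof.
move=> yNp [F_inj F_sub F_blocked F_skipped] iC Fi le_yi i_min.
set F' := [ffun _ => _].
have F'i : F' i = Some y by rewrite ffunE eqxx.
have F'E j : j != i -> F' j = F j by rewrite ffunE => /negbTE ->.
have F'E_filled j : F j != None -> F' j = F j.
  by move=> Fj; apply: F'E; apply: contraNneq _ Fj => ->; rewrite Fi.
have F'_filled j : F j != None -> F' j != None by move=> Fj; rewrite F'E_filled.
have Fy j : F j != Some y by apply/eqP => /F_sub [_ yp _]; rewrite yp in yNp.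
split.
- move=> j1 j2 x.
  have F'_not_y j : j != i -> F' j = Some x -> x != y.
    by move=> /F'E -> Fj; apply: contraNneq _ (Fy j) => <-; rewrite Fj.
  case: (eqVneq j1 i) => [-> | j1i]; case: (eqVneq j2 i) => [-> | j2i] //.
  + rewrite F'i => -[yx] F'j2.
    by have := F'_not_y _ j2i F'j2; rewrite yx eqxx.
  + move=> F'j1; rewrite F'i => -[yx].
    by have := F'_not_y _ j1i F'j1; rewrite yx eqxx.
  + by rewrite !F'E //; apply: F_inj.
- move=> j x; case: (eqVneq j i) => [-> | ji].
    by rewrite F'i => -[<-]; rewrite mem_rcons mem_head.
  by rewrite F'E // => /F_sub [? xp ?]; rewrite mem_rcons in_cons xp orbT.
- move=> x; rewrite mem_rcons in_cons => /predU1P [-> /(_ i) | xp x_unplaced].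
    by rewrite F'i eqxx.
  move=> c cC le_xc; apply: F'_filled; apply: F_blocked xp _ c cC le_xc => j.
  by apply: contra_neq _ (x_unplaced j) => Fj; rewrite F'E_filled ?Fj.
- move=> b x c; case: (eqVneq b i) => [-> | bi].
    rewrite F'i => -[<-] cC le_yc lt_ci; rewrite F'E; last by rewrite neq_ltn lt_ci.
    by apply/eqP => Fc; have := i_min c cC Fc le_yc; rewrite leqNgt lt_ci.
  by rewrite F'E // => Fb cC le_xc lt_cb; apply: F'_filled; apply: F_skipped Fb cC le_xc lt_cb.
Qed.

Lemma fill_step_inv p F y :
  y \notin p -> filling_inv p F -> filling_inv (rcons p y) (fill_step C F y).
Proof.
move=> yNp invF; rewrite /fill_step; case: target_boxP => [i | no_box].
  exact: fill_box_inv.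
case: invF => F_inj F_sub F_blocked F_skipped; split=> //.
- by move=> i x /F_sub [? xp ?]; rewrite mem_rcons in_cons xp orbT.
- by move=> x; rewrite mem_rcons in_cons => /predU1P [-> _ | /F_blocked //]; apply: no_box.
Qed.

Lemma filling_invP p : uniq p -> filling_inv p (filling C p).
Proof.
elim/last_ind: p => [_ | p y IHp]; first exact: filling_inv_nil.
rewrite rcons_uniq => /andP [yNp /IHp invF].
by rewrite /filling foldl_rcons; apply: fill_step_inv.
Qed.

End FillStep.

Section FillingRank.
Variables (n : nat) (C S : {set 'I_n}) (p : seq 'I_n).
Hypotheses (p_uniq : uniq p) (mem_p : p =i S).

Let F := filling C p.
Let F_inv := filling_invP C p_uniq.
Let filled := [set i in C | F i != None].
Let value i := odflt i (F i).

Let filled_value i : i \in filled -> F i = Some (value i).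
Proof. by rewrite inE /value => /andP [_]; case: (F i). Qed.

Lemma filling_size_le_rank : filling_size C F <= schubert_rank C S.
Proof.
apply: (@schubert_rank_ge_matching _ _ _ filled value).
- by apply/subsetP => i; rewrite inE => /andP [].
- move=> i j /filled_value Fi /filled_value Fj vij.
  by apply: (filled_inj F_inv Fi); rewrite vij.
- apply/subsetP => _ /imsetP [i /filled_value /(filled_sub F_inv) [_ vp _] ->].
  by rewrite -mem_p.
- by move=> i /filled_value /(filled_sub F_inv) [].
Qed.

(* t is one past the last empty box of C. *)
Lemma filling_threshold : exists2 t,
  (forall c, c \in C -> t <= c -> F c != None) &
  (forall x, x \in p -> x < t -> exists2 i, F i = Some x & i < t).
Proof.
pose full_from t := [forall c, (c \in C) && (t <= c) ==> (F c != None)].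
have full_fromP t : reflect (forall c, c \in C -> t <= c -> F c != None) (full_from t).
  apply: (iffP forallP) => full c; last by apply/implyP => /andP [cC le_tc]; apply: full.
  by move=> cC le_tc; have := full c; rewrite cC le_tc.
have full_n : full_from n by apply/full_fromP => c _; rewrite leqNgt ltn_ord.
have [t /full_fromP full_t t_min] := ex_minnP (ex_intro _ n full_n).
exists t => // x xp lt_xt.
have [i /eqP Fi | x_unplaced] := pickP (fun i => F i == Some x); last first.
  have /t_min : full_from x.
    by apply/full_fromP; apply: (unplaced_blocked F_inv xp) => i; rewrite x_unplaced.
  by rewrite leqNgt lt_xt.
exists i => //; case: t full_t t_min lt_xt => // t full_t t_min lt_xt.
have : ~~ full_from t by apply/negP => /t_min; rewrite ltnn.
case/forallPn => c; rewrite negb_imply negbK => /andP [/andP [cC le_tc] /eqP Fc].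
have le_ct : c <= t.
  by rewrite leqNgt; apply/negP => /(full_t c cC); rewrite Fc.
have le_ic : i <= c.
  rewrite leqNgt; apply/negP => lt_ci.
  by have := skipped_filled F_inv Fi cC (leq_trans (ltnSE lt_xt) le_tc) lt_ci; rewrite Fc.
exact: leq_trans le_ic le_ct.
Qed.

Lemma rank_le_filling_size : schubert_rank C S <= filling_size C F.
Proof.
have [t full_t placed_below] := filling_threshold.
apply: leq_trans (schubert_rank_le_split C S t) _.
rewrite /filling_size -/filled -(cardsID (geq_set n t) filled) [leqRHS]addnC.
apply: leq_add.
- apply: leq_trans (leq_imset_card value _); apply: subset_leq_card; apply/subsetP => x.
  rewrite !inE -ltnNge -mem_p => /andP [lt_xt xp].
  have [i Fi lt_it] := placed_below x xp lt_xt.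
  apply/imsetP; exists i; last by rewrite /value Fi.
  by rewrite !inE -ltnNge lt_it Fi andbT; case: (filled_sub F_inv Fi).
- apply: subset_leq_card; apply/subsetP => c; rewrite !inE => /andP [cC le_tc].
  by rewrite cC le_tc full_t.
Qed.

End FillingRank.

Theorem theorem3p3 (n : nat) (C S : {set 'I_n}) (pi : seq 'I_n) :
  perm_eq pi (enum S) ->
  schubert_rank C S = filling_size C (filling C pi).
Proof.
move=> perm_pi.
have pi_uniq : uniq pi by rewrite (perm_uniq perm_pi) enum_uniq.
have mem_pi : pi =i S by move=> x; rewrite (perm_mem perm_pi) mem_enum.
apply/eqP; rewrite eqn_leq.
by rewrite (rank_le_filling_size C pi_uniq mem_pi) (filling_size_le_rank C pi_uniq mem_pi).
Qed.
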